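(* Let $A\in P(n)$ and $B\in P(m)$, and let $A\otimes B\in P(nm)$ be the Kronecker product, i.e. the block matrix whose $(i,j)$ block is $A_{ij}B$. Then $I(A\otimes B)=I(A)\,I(B)$.
   Context: $P(k)$ denotes the positive semidefinite complex $k\times k$ matrices. For $C\in P(k)$, let $P_k$ be the $k\times k$ matrix with all entries equal to $1$; the minimal index is $I(C)=\max\{\lambda\ge 0: C-\lambda P_k\ge 0\}$. *)

From HB Require Import structures.
From mathcomp Require Import all_boot all_order all_algebra.
From mathcomp Require Import reals.
From mathcomp.real_closed Require Import complex mxtens.

Set Implicit Arguments.
Unset Strict Implicit.
Unset Printing Implicit Defensive.

Import Order.TTheory GRing.Theory Num.Theory.
Local Open Scope ring_scope.

Definition adjmx {C : numClosedFieldType} {m n} (A : 'M[C]_(m, n)) : 'M[C]_(n, m) :=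
  map_mx Num.conj (A^T).

Definition psdmx {C : numClosedFieldType} {k} (A : 'M[C]_k) : Prop :=
  adjmx A = A /\ forall v : 'rV[C]_k, 0 <= (v *m A *m adjmx v) 0 0.

Definition onesmx {C : numClosedFieldType} (k : nat) : 'M[C]_k := const_mx 1.

(* I(A) = max {lambda >= 0 : A - lambda P_k >= 0}; relational form:
   [is_min_index A l] says that l is this maximum. *)
Definition is_min_index {R : realType} {k} (A : 'M[R[i]]_k) (l : R) : Prop :=
  [/\ 0 <= l,
      psdmx (A - (l%:C)%C *: onesmx k)
    & forall mu : R, 0 <= mu -> psdmx (A - (mu%:C)%C *: onesmx k) -> mu <= l].

From HB Require Import structures.
From mathcomp Require Import all_boot all_order all_algebra.
From mathcomp Require Import reals.
From mathcomp.real_closed Require Import complex mxtens.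
From mathcomp Require Import sesquilinear spectral.
From mathcomp Require Import ring.
From Stdlib Require Import Classical.

Set Implicit Arguments.
Unset Strict Implicit.
Unset Printing Implicit Defensive.

Import Order.TTheory GRing.Theory Num.Theory.
Local Open Scope ring_scope.

(* Write J for an all-ones matrix.  Since J_n (x) J_m = J_nm, the identity
   A (x) B - ab J = (A - aJ) (x) B + aJ (x) (B - bJ) together with the fact that
   Kronecker products of PSD matrices are PSD (factor both as Gram matrices)
   gives I(A (x) B) >= I(A) I(B).  Conversely, if mu > I(A) I(B), pick a' > I(A),
   b' > I(B) with a'b' < mu, and vectors x, y on which A - a'J and B - b'J are
   negative; the quadratic form of A (x) B - mu J is negative on x (x) y, because
   quadratic forms are multiplicative on elementary tensors. *)

Section PsdMatrices.
Variable C : numClosedFieldType.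

Lemma adjmx_mul m n p (A : 'M[C]_(m, n)) (B : 'M[C]_(n, p)) :
  adjmx (A *m B) = adjmx B *m adjmx A.
Proof. by rewrite /adjmx trmx_mul map_mxM. Qed.

Lemma adjmxK m n (A : 'M[C]_(m, n)) : adjmx (adjmx A) = A.
Proof. exact: trmxCK. Qed.

Lemma adjmxD m n (A B : 'M[C]_(m, n)) : adjmx (A + B) = adjmx A + adjmx B.
Proof. by apply/matrixP => i j; rewrite !mxE rmorphD. Qed.

Lemma adjmxZ m n c (A : 'M[C]_(m, n)) : adjmx (c *: A) = c^* *: adjmx A.
Proof. by apply/matrixP => i j; rewrite !mxE rmorphM. Qed.

Lemma adjmxB m n (A B : 'M[C]_(m, n)) : adjmx (A - B) = adjmx A - adjmx B.
Proof. by rewrite -scaleN1r adjmxD adjmxZ rmorphN1 scaleN1r. Qed.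

Lemma adjmx_tens m n p q (A : 'M[C]_(m, n)) (B : 'M[C]_(p, q)) :
  adjmx (A *t B) = adjmx A *t adjmx B.
Proof. by rewrite /adjmx trmx_tens (map_mxT Num.Def.conjC). Qed.

Definition qform {k} (A : 'M[C]_k) (v : 'rV[C]_k) : C := (v *m A *m adjmx v) 0 0.

Lemma qformD k (A B : 'M[C]_k) v : qform (A + B) v = qform A v + qform B v.
Proof. by rewrite /qform mulmxDr mulmxDl mxE. Qed.

Lemma qformZ k c (A : 'M[C]_k) v : qform (c *: A) v = c * qform A v.
Proof. by rewrite /qform -scalemxAr -scalemxAl mxE. Qed.

Lemma qform_subZ k c (A B : 'M[C]_k) v :
  qform (A - c *: B) v = qform A v - c * qform B v.
Proof. by rewrite -scaleNr qformD qformZ mulNr. Qed.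

Lemma qform_tens n m (A : 'M[C]_n) (B : 'M[C]_m) (x : 'rV_n) (y : 'rV_m) :
  qform (A *t B) (x *t y) = qform A x * qform B y.
Proof.
have /(congr1 (fun M : 'M_(1 * 1) => M 0 0)) :
    (x *t y) *m (A *t B) *m adjmx (x *t y) = (x *m A *m adjmx x) *t (y *m B *m adjmx y).
  by rewrite adjmx_tens !tensmx_mul.
rewrite /qform => ->; rewrite mxE.
by case: mxtens_unindex => i j; rewrite (ord1 i) (ord1 j).
Qed.

Lemma psdmx_gram p k (L : 'M[C]_(p, k)) : psdmx (adjmx L *m L).
Proof.
split=> [|v]; first by rewrite adjmx_mul adjmxK.
have -> : v *m (adjmx L *m L) *m adjmx v = v *m adjmx L *m adjmx (v *m adjmx L).
  by rewrite adjmx_mul adjmxK !mulmxA.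
rewrite mxE.
by apply: sumr_ge0 => i _; rewrite !mxE mul_conjC_ge0.
Qed.

(* The spectral theorem gives A = P^* D P with P unitary; the diagonal of D is
   nonnegative by testing A on the rows of P, so L = sqrt(D) P works. *)
Lemma psdmx_factor k (A : 'M[C]_k) : psdmx A -> exists L : 'M[C]_k, A = adjmx L *m L.
Proof.
move=> [hermA posA].
have /orthomx_spectralP : A \is normalmx by apply/normalmxP; rewrite [A^t*%sesqui]hermA.
set P := spectralmx A; set d := spectral_diag A => defA.
have P_unitary : P \is unitarymx by exact: spectral_unitarymx.
have invP : invmx P = adjmx P by rewrite invmx_unitary.
have PPadj : P *m adjmx P = 1%:M by apply/unitarymxP.
have d_ge0 i : 0 <= d 0 i.
  have := posA ('e_i *m P).
  rewrite defA invP adjmx_mul !mulmxA -(mulmxA _ P) PPadj mulmx1.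
  rewrite -(mulmxA _ P) PPadj mulmx1 -rowE row_diag_mx -scalemxAl.
  have -> : adjmx (delta_mx 0 i : 'rV[C]_k) = delta_mx i 0.
    by apply/matrixP => a b; rewrite !mxE rmorph_nat andbC.
  by rewrite mul_delta_mx mxE mxE eqxx mulr1.
set s := \row_j sqrtC (d 0 j).
have herm_s : adjmx (diag_mx s) = diag_mx s.
  apply/matrixP => a b; rewrite !mxE geC0_conj ?mulrn_wge0 ?sqrtC_ge0 // eq_sym.
  by case: eqP => [->|].
exists (diag_mx s *m P).
rewrite adjmx_mul herm_s !mulmxA -(mulmxA (adjmx P)) mulmx_diag {1}defA invP.
by congr (_ *m diag_mx _ *m _); apply/rowP => j; rewrite !mxE -expr2 sqrtCK.
Qed.

Lemma psdmx_tens m n (A : 'M[C]_m) (B : 'M[C]_n) :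
  psdmx A -> psdmx B -> psdmx (A *t B).
Proof.
move=> /psdmx_factor [L ->] /psdmx_factor [M ->].
by rewrite -tensmx_mul -adjmx_tens; exact: psdmx_gram.
Qed.

Lemma psdmxD k (A B : 'M[C]_k) : psdmx A -> psdmx B -> psdmx (A + B).
Proof.
move=> [hA pA] [hB pB]; split=> [|v]; first by rewrite adjmxD hA hB.
by rewrite -/(qform _ v) qformD; exact: addr_ge0 (pA v) (pB v).
Qed.

Lemma psdmxZ k c (A : 'M[C]_k) : 0 <= c -> psdmx A -> psdmx (c *: A).
Proof.
move=> c_ge0 [hA pA]; split=> [|v]; first by rewrite adjmxZ hA geC0_conj.
by rewrite -/(qform _ v) qformZ; exact: mulr_ge0 c_ge0 (pA v).
Qed.

Lemma psdmx_ones k : psdmx (onesmx k : 'M[C]_k).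
Proof.
have -> : onesmx k = adjmx (const_mx 1 : 'rV[C]_k) *m const_mx 1.
  by apply/matrixP => i j; rewrite !mxE big_ord1 !mxE rmorph1 mulr1.
exact: psdmx_gram.
Qed.

Lemma tensmx_ones n m : (onesmx n : 'M[C]_n) *t onesmx m = onesmx (n * m).
Proof. by apply/matrixP => i j; rewrite !mxE mulr1. Qed.

Lemma psdmx_tens_sub_ones n m (A : 'M[C]_n) (B : 'M[C]_m) a b : 0 <= a ->
  psdmx (A - a *: onesmx n) -> psdmx B -> psdmx (B - b *: onesmx m) ->
  psdmx (A *t B - (a * b) *: onesmx (n * m)).
Proof.
move=> a_ge0 pAa pB pBb.
have -> : A *t B - (a * b) *: onesmx (n * m) =
    (A - a *: onesmx n) *t B + (a *: onesmx n) *t (B - b *: onesmx m).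
  by apply/matrixP => i j; rewrite !mxE; ring.
by apply: psdmxD; apply: psdmx_tens => //; apply: psdmxZ => //; exact: psdmx_ones.
Qed.

End PsdMatrices.

Lemma exists_gt_mulr_lt (R : realFieldType) (a b mu : R) :
  0 <= b -> a * b < mu -> exists2 a', a < a' & a' * b < mu.
Proof.
move=> b_ge0 ab_lt; exists (a + (mu - a * b) / (b + 1)).
  by rewrite ltrDl divr_gt0 // ?subr_gt0 // ltr_wpDl.
have b1_gt0 : 0 < b + 1 by rewrite ltr_wpDl.
rewrite mulrDl -ltrBrDl mulrAC ltr_pdivrMr // ltr_pM2l ?subr_gt0 //.
by rewrite ltrDl.
Qed.

Section MinimalIndex.
Variable R : realType.
Local Notation "x %:C" := (x%:C)%C.

Lemma min_index_witness k (A : 'M[R[i]]_k) a c :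
  psdmx A -> is_min_index A a -> a < c ->
  exists x, 0 < qform (onesmx k) x /\ qform A x < c%:C * qform (onesmx k) x.
Proof.
move=> pA [a_ge0 _ maxA] ac.
have c_ge0 : 0 <= c%:C by rewrite ler0c (le_trans a_ge0) ?ltW.
have not_psd : ~ psdmx (A - c%:C *: onesmx k).
  by move=> /(maxA c (le_trans a_ge0 (ltW ac))); rewrite leNgt ac.
have herm : adjmx (A - c%:C *: onesmx k) = A - c%:C *: onesmx k.
  by rewrite adjmxB adjmxZ (geC0_conj c_ge0) pA.1 (@psdmx_ones _ k).1.
have [x] : exists x, ~ 0 <= qform (A - c%:C *: onesmx k) x.
  by apply: not_all_ex_not => posAc; apply: not_psd; split.
have qA_ge0 : 0 <= qform A x := pA.2 x.
have qJ_ge0 : 0 <= qform (onesmx k) x := (@psdmx_ones _ k).2 x.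
rewrite qform_subZ subr_ge0 real_leNgt ?ger0_real ?mulr_ge0 // => /negP /negPn lt_x.
exists x; split=> //; rewrite lt_def qJ_ge0 andbT.
by apply: contraTneq lt_x => ->; rewrite mulr0 le_gtF.
Qed.

Lemma min_index_tens_ub n m (A : 'M[R[i]]_n) (B : 'M[R[i]]_m) a b mu :
  psdmx A -> psdmx B -> is_min_index A a -> is_min_index B b ->
  psdmx (A *t B - mu%:C *: onesmx (n * m)) -> mu <= a * b.
Proof.
move=> pA pB minA minB pmu; rewrite leNgt; apply/negP => ab_lt.
have [[a_ge0 _ _] [b_ge0 _ _]] := (minA, minB).
have [a' aa' a'b_lt] := exists_gt_mulr_lt b_ge0 ab_lt.
have a'_ge0 : 0 <= a' by rewrite (le_trans a_ge0) ?ltW.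
rewrite mulrC in a'b_lt; have [b' bb' b'a'_lt] := exists_gt_mulr_lt a'_ge0 a'b_lt.
have [x [Jx_gt0 Ax_lt]] := min_index_witness pA minA aa'.
have [y [Jy_gt0 By_lt]] := min_index_witness pB minB bb'.
have lt_xy : qform A x * qform B y < mu%:C * (qform (onesmx n) x * qform (onesmx m) y).
  apply: (lt_trans (ltr_pM (pA.2 x) (pB.2 y) Ax_lt By_lt)).
  by rewrite mulrACA ltr_pM2r ?mulr_gt0 // -rmorphM ltcR mulrC.
have := pmu.2 (x *t y); rewrite -/(qform _ _) qform_subZ -tensmx_ones.
by rewrite !qform_tens subr_ge0 => /(lt_le_trans lt_xy); rewrite ltxx.
Qed.

End MinimalIndex.

Theorem corollary2p3 (R : realType) (n m : nat) (A : 'M[R[i]]_n) (B : 'M[R[i]]_m)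
  (a b : R) :
  (0 < n)%N -> (0 < m)%N -> psdmx A -> psdmx B ->
  is_min_index A a -> is_min_index B b ->
  is_min_index (A *t B) (a * b).
Proof.
move=> _ _ pA pB minA minB; have [a_ge0 pAa _] := minA; have [b_ge0 pBb _] := minB.
split; first exact: mulr_ge0.
  by rewrite rmorphM; apply: psdmx_tens_sub_ones; rewrite ?ler0c.
by move=> mu _; exact: min_index_tens_ub.
Qed.
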